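(* Let $A$ be a finitely generated abelian group of torsion-free rank $k>0$ with a finite generating subset $S'$, and let $m$ be a fixed natural number. There exists a constant $C>0$ such that for every $\ell$, every group homomorphism $\varphi:\mathbb{Z}^\ell\to A$ and every generating subset $S$ of $\mathbb{Z}^\ell$ with $|S|\le m$, $$\|\ker(\varphi)\|_S\le C(\|\varphi\|_{S,S'})^k.$$ Moreover, there exists $m'$, not depending on $\varphi$, such that this bound is achieved by a generating subset of $\ker(\varphi)$ with at most $m'$ elements.
   Context: $\|\cdot\|_S$ is word length; $\|\varphi\|_{S,S'}=\max_{s\in S}\|\varphi(s)\|_{S'}$. For a subgroup $H$, $\|H\|_S=\min\{\max_{h\in X}\|h\|_S: X\text{ a finite generating subset of }H\}$. *)

From HB Require Import structures.
From mathcomp Require Import all_boot all_order all_algebra.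
From Stdlib Require Import ClassicalEpsilon.
Set Implicit Arguments. Unset Strict Implicit. Unset Printing Implicit Defensive.
Import Order.TTheory GRing.Theory Num.Theory.
Local Open Scope ring_scope.

(* Abelian groups are written additively (zmodType).  A word in the finite
   generating list S (and its inverses) evaluates to \sum_i c_i *~ S_i with
   c_i : int; its length is \sum_i |c_i|. *)

Definition wl_le (G : zmodType) (S : seq G) (g : G) (n : nat) : Prop :=
  exists c : seq int, size c = size S /\
    g = \sum_(i < size S) S`_i *~ c`_i /\
    (\sum_(i < size S) absz (nth 0%R c i) <= n)%N.

Definition in_span (G : zmodType) (S : seq G) (g : G) : Prop :=
  exists n, wl_le S g n.

Definition generates (G : zmodType) (S : seq G) : Prop :=
  forall g : G, in_span S g.

(* word length ||g||_S : the least n with wl_le S g n (meaningful when g is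
   in the span of S; otherwise an unspecified value). *)
Definition wordlen (G : zmodType) (S : seq G) (g : G) : nat :=
  epsilon (inhabits 0%N)
    (fun n => wl_le S g n /\ forall n', wl_le S g n' -> (n <= n')%N).

Definition opnorm (G H : zmodType) (phi : G -> H) (S : seq G) (S' : seq H)
  : nat := (\max_(s <- S) wordlen S' (phi s))%N.

Definition gen_by (G : zmodType) (X : seq G) (K : G -> Prop) : Prop :=
  (forall x, x \in X -> K x) /\ (forall h, K h -> in_span X h).

Definition subnorm (G : zmodType) (S : seq G) (K : G -> Prop) : nat :=
  epsilon (inhabits 0%N)
    (fun n => (exists X, gen_by X K /\ (\max_(x <- X) wordlen S x)%N = n) /\
       forall X, gen_by X K -> (n <= \max_(x <- X) wordlen S x)%N).

Definition Zindep (A : zmodType) (n : nat) (v : 'I_n -> A) : Prop :=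
  forall c : 'I_n -> int, \sum_(i < n) v i *~ c i = 0 -> forall i, c i = 0.

Definition tf_rank (A : zmodType) (k : nat) : Prop :=
  (exists v : 'I_k -> A, Zindep v) /\
  (forall v : 'I_k.+1 -> A, ~ Zindep v).

Definition is_hom (G H : zmodType) (phi : G -> H) : Prop :=
  forall x y, phi (x + y) = phi x + phi y.

(** The torsion-free rank k enters through a maximal independent family
    v_1, ..., v_k of A: some N > 0 sends every generator in S' into the lattice
    spanned by the v_r.  For phi and S = (s_1, ..., s_n), a coefficient vector
    c in Z^n with sum c_i phi(s_i) = 0 then lies in the kernel of the k x n
    integer matrix M of v-coordinates of the N phi(s_i), whose entries are
    O(|phi|_{S,S'}); conversely N ker M consists of such relations.  A
    nonsingular minor of M of maximal size solves ker M by Cramer's rule, and a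
    Hermite basis of the projected lattice yields at most n generators of ker M
    with entries O(k! |phi|^k).  Their N-fold multiples, together with the at
    most N^n relations whose coefficients on these generators lie in [0, N),
    generate all relations, and their images in Z^l generate ker phi with
    S-length O(|phi|^k). *)

From HB Require Import structures.
From mathcomp Require Import all_boot all_order all_algebra.
From Stdlib Require Import Classical ClassicalEpsilon.
From mathcomp Require Import perm ring.
Import Order.TTheory GRing.Theory Num.Theory.
Set Implicit Arguments. Unset Strict Implicit. Unset Printing Implicit Defensive.
Local Open Scope ring_scope.

Lemma ex_minP (P : nat -> Prop) :
  (exists n, P n) -> exists2 n, P n & forall m, P m -> (n <= m)%N.
Proof.
pose p n : bool := excluded_middle_informative (P n).
have pP n : reflect (P n) (p n) by apply: sumboolP.
move=> [n /pP pn]; case: (ex_minnP (ex_intro p n pn)) => d /pP Pd dmin.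
by exists d => // m /pP /dmin.
Qed.

Lemma ex_maxP (P : nat -> Prop) b :
  (exists n, P n) -> (forall n, P n -> (n <= b)%N) ->
  exists2 n, P n & forall m, P m -> (m <= n)%N.
Proof.
pose p n : bool := excluded_middle_informative (P n).
have pP n : reflect (P n) (p n) by apply: sumboolP.
move=> [n /pP pn] Pb; have pb m : p m -> (m <= b)%N by move/pP/Pb.
case: (ex_maxnP (ex_intro p n pn) pb) => d /pP Pd dmax.
by exists d => // m /pP /dmax.
Qed.

Definition is_subgroup (V : zmodType) (Q : V -> Prop) : Prop :=
  Q 0 /\ forall x y, Q x -> Q y -> Q (x - y).

Section Subgroup.
Variables (V : zmodType) (Q : V -> Prop).
Hypothesis hQ : is_subgroup Q.

Lemma subgroup0 : Q 0. Proof. exact: hQ.1. Qed.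

Lemma subgroupB x y : Q x -> Q y -> Q (x - y). Proof. exact: hQ.2. Qed.

Lemma subgroupN x : Q x -> Q (- x).
Proof. by rewrite -sub0r; apply: subgroupB subgroup0. Qed.

Lemma subgroupD x y : Q x -> Q y -> Q (x + y).
Proof. by move=> Qx Qy; rewrite -[y]opprK; apply/subgroupB/subgroupN. Qed.

Lemma subgroupMn x n : Q x -> Q (x *+ n).
Proof.
move=> Qx; elim: n => [|n IH]; first by rewrite mulr0n; apply: subgroup0.
by rewrite mulrS; apply: subgroupD.
Qed.

Lemma subgroupMz x z : Q x -> Q (x *~ z).
Proof. by case: z => n Qx; rewrite ?NegzE ?mulrNz; [|apply: subgroupN]; apply: subgroupMn. Qed.

Lemma subgroup_sum (I : Type) (r : seq I) (P : pred I) (F : I -> V) :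
  (forall i, P i -> Q (F i)) -> Q (\sum_(i <- r | P i) F i).
Proof. by move=> QF; apply: big_ind => //; [apply: subgroup0 | apply: subgroupD]. Qed.

End Subgroup.

Lemma subgroupI (V : zmodType) (P Q : V -> Prop) :
  is_subgroup P -> is_subgroup Q -> is_subgroup (fun x => P x /\ Q x).
Proof.
move=> hP hQ; split; first by split; apply: subgroup0.
by move=> x y [Px Qx] [Py Qy]; split; apply: subgroupB.
Qed.

Definition inZspan (V : zmodType) (X : seq V) (y : V) : Prop :=
  exists c : nat -> int, y = \sum_(i < size X) X`_i *~ c i.

Section ZSpan.
Variable V : zmodType.
Implicit Types (X Y : seq V) (x y : V).

Lemma inZspan_subgroup X : is_subgroup (inZspan X).
Proof.
split; first by exists (fun _ => 0); rewrite big1 // => i _; rewrite mulr0z.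
move=> _ _ [c ->] [d ->]; exists (fun i => c i - d i).
by rewrite -sumrB; apply: eq_bigr => i _; rewrite mulrzBr.
Qed.

Lemma inZspan_mem X x : x \in X -> inZspan X x.
Proof.
move=> xX; have ltxX : (index x X < size X)%N by rewrite index_mem.
exists (fun i => (i == index x X)%:Z); rewrite (bigD1 (Ordinal ltxX)) //=.
rewrite nth_index // eqxx mulr1z big1 ?addr0 // => i /eqP neq.
rewrite (_ : (i == _ :> nat) = false) ?mulr0z //.
by apply/negP => /eqP eq_i; apply/neq/val_inj.
Qed.

Lemma subgroup_span (Q : V -> Prop) X y :
  is_subgroup Q -> {in X, forall x, Q x} -> inZspan X y -> Q y.
Proof.
move=> hQ QX [c ->]; apply: subgroup_sum => // i _.
by apply: (subgroupMz hQ); apply/QX/mem_nth.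
Qed.

Lemma inZspan_sub X Y y : {subset X <= Y} -> inZspan X y -> inZspan Y y.
Proof.
by move=> XY; apply: subgroup_span (inZspan_subgroup Y) _ => x /XY /inZspan_mem.
Qed.

End ZSpan.

Lemma hom0 (G H : zmodType) (phi : G -> H) : is_hom phi -> phi 0 = 0.
Proof. by move=> hphi; apply: (addrI (phi 0)); rewrite -hphi !addr0. Qed.

Definition hom_additive (G H : zmodType) (phi : G -> H) (hphi : is_hom phi) :
  {additive G -> H} := HB.pack phi (GRing.isNmodMorphism.Build G H phi (hom0 hphi, hphi)).

Lemma hom_sum_mulrz (G H : zmodType) (phi : G -> H) n (x : 'I_n -> G) (c : 'I_n -> int) :
  is_hom phi -> phi (\sum_i x i *~ c i) = \sum_i phi (x i) *~ c i.
Proof.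
move=> hphi; rewrite -[phi]/(hom_additive hphi : G -> H) raddf_sum.
by apply: eq_bigr => i _; rewrite raddfMz.
Qed.

Lemma subgroup_min_dvd (V : zmodType) (Q : V -> Prop) (f : V -> int) y0 :
  is_subgroup Q -> is_hom f -> Q y0 -> 0 < f y0 ->
  (forall y, Q y -> 0 < f y -> f y0 <= f y) -> forall y, Q y -> (f y0 %| f y)%Z.
Proof.
move=> hQ hf Qy0 fy0_gt0 fy0_min y Qy; pose F := hom_additive hf.
have Qr : Q (y - y0 *~ (f y %/ f y0)%Z) by apply: subgroupB => //; exact: subgroupMz.
have fr : f (y - y0 *~ (f y %/ f y0)%Z) = (f y %% f y0)%Z.
  rewrite -[f]/(F : V -> int) raddfB raddfMz {1}(divz_eq (F y) (F y0)) mulrzz.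
  by rewrite mulrC addrAC subrr add0r.
apply/dvdz_mod0P; apply/eqP; apply: contraT => r_neq0.
have r_gt0 : 0 < (f y %% f y0)%Z by rewrite lt_def r_neq0 modz_ge0 ?gt_eqF.
by have := fy0_min _ Qr; rewrite fr leNgt ltz_pmod // => /(_ r_gt0).
Qed.

(** * Kernels of integer matrices *)

Lemma norm_det_le (R : numDomainType) r (A : 'M[R]_r) (B : R) : 0 <= B ->
  (forall i j, `|A i j| <= B) -> `|\det A| <= r`!%:R * B ^+ r.
Proof.
move=> B0 hA; apply: le_trans (ler_norm_sum _ _ _) _.
rewrite mulr_natl -card_Sn -sumr_const; apply: ler_sum => s _.
rewrite normrM normrX normrN1 expr1n mul1r normr_prod -[in B ^+ r](card_ord r) -prodr_const.
by apply: ler_prod => i _; rewrite normr_ge0 hA.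
Qed.

Lemma norm_adj_mul_le (R : numDomainType) r p (A : 'M[R]_r) (Q : 'M[R]_(r, p)) (B : R) :
  0 <= B -> (forall i j, `|A i j| <= B) -> (forall i j, `|Q i j| <= B) ->
  forall a t, `|(\adj A *m Q) a t| <= r`!%:R * B ^+ r.
Proof.
case: r A Q => [|r] A Q B0 hA hQ a t; first by case: a.
rewrite mxE; apply: le_trans (ler_norm_sum _ _ _) _.
have -> : (r.+1)`!%:R * B ^+ r.+1 = \sum_(b < r.+1) r`!%:R * B ^+ r * B.
  by rewrite sumr_const card_ord factS natrM -mulr_natl exprSr; ring.
apply: ler_sum => b _; rewrite normrM; apply: ler_pM => //.
rewrite !mxE normrM normrX normrN1 expr1n mul1r.
by apply: norm_det_le => // i j; rewrite !mxE.
Qed.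

Lemma det_border (R : idomainType) r (A : 'M[R]_r) (b : 'cV[R]_r) (c : 'rV[R]_r)
    (d : 'M[R]_1) : \det A != 0 ->
  \det (block_mx A b c d) = \det A * d 0 0 - (c *m \adj A *m b) 0 0.
Proof.
move=> nzA; pose E := block_mx 1%:M (- (\adj A *m b)) 0 (\det A)%:M : 'M[R]_(r + 1).
have AE : block_mx A b c d *m E = block_mx A 0 c (\det A *: d - c *m \adj A *m b).
  rewrite mulmx_block !mulmx1 !mulmx0 !addr0 !mulmxN mulmxA mul_mx_adj.
  by rewrite mul_scalar_mx !mul_mx_scalar addNr addrC mulmxA.
have := congr1 determinant AE.
rewrite det_mulmx det_ublock det1 mul1r det_scalar1 det_lblock det_mx11 !mxE.
by rewrite [X in X = _]mulrC => /(mulfI nzA).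
Qed.

Lemma mulmxzE (R : zmodType) m n (A : 'M[R]_(m, n)) z i j : (A *~ z) i j = A i j *~ z.
Proof. by case: z => d; rewrite ?NegzE ?mulrNz ?mxE mulmxnE. Qed.

Definition ext_ord (T : Type) r (f : 'I_r -> T) (x : T) (u : 'I_(r + 1)) : T :=
  if split u is inl a then f a else x.

Lemma mxsub_ext_ord (R : Type) k n (M : 'M[R]_(k, n)) r (f : 'I_r -> 'I_k)
    (g : 'I_r -> 'I_n) i t :
  mxsub (ext_ord f i) (ext_ord g t) M =
  block_mx (mxsub f g M) (mxsub f (fun=> t) M)
           (mxsub (fun=> i) g M) (mxsub (fun=> i) (fun=> t) M).
Proof.
apply/matrixP => u v; rewrite /ext_ord !mxE.
by case: (split u) => a; rewrite !mxE; case: (split v) => b; rewrite !mxE.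
Qed.

Definition proj_compl {R : pzRingType} n r (g : 'I_r -> 'I_n) : 'M[R]_n :=
  \matrix_(i, j) ((i == j) && (i \notin codom g))%:R.

Lemma proj_complE (R : pzRingType) n r (g : 'I_r -> 'I_n) p (x : 'M[R]_(n, p)) i j :
  (proj_compl g *m x) i j = if i \in codom g then 0 else x i j.
Proof.
rewrite mxE (bigD1 i) //= big1 => [|t /negbTE nit]; last by rewrite mxE eq_sym nit mul0r.
by rewrite mxE eqxx addr0; case: (i \in codom g); rewrite ?mul0r ?mul1r.
Qed.

Section Minors.
Variables (R : idomainType) (k n : nat) (M : 'M[R]_(k, n)).

Definition has_nonzero_minor r := exists (f : 'I_r -> 'I_k) (g : 'I_r -> 'I_n),
  \det (mxsub f g M) != 0.

Lemma minor_row_inj r (f : 'I_r -> 'I_k) (g : 'I_r -> 'I_n) :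
  \det (mxsub f g M) != 0 -> injective f.
Proof.
move=> nz; apply/injectiveP; apply/negPn/negP => /injectivePn [x [y nxy fxy]].
by move: nz; rewrite (determinant_alternate nxy) ?eqxx // => j; rewrite !mxE fxy.
Qed.

Lemma minor_col_inj r (f : 'I_r -> 'I_k) (g : 'I_r -> 'I_n) :
  \det (mxsub f g M) != 0 -> injective g.
Proof.
move=> nz; apply/injectiveP; apply/negPn/negP => /injectivePn [x [y nxy gxy]].
by move: nz; rewrite -det_tr (determinant_alternate nxy) ?eqxx // => j; rewrite !mxE gxy.
Qed.

Lemma has_nonzero_minor_le r : has_nonzero_minor r -> (r <= k)%N.
Proof. by move=> [f [g /minor_row_inj/leq_card]]; rewrite !card_ord. Qed.

Variables (r : nat) (f : 'I_r -> 'I_k) (g : 'I_r -> 'I_n).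
Let A := mxsub f g M.
Hypothesis nzA : \det A != 0.

Lemma bordered_minor_sum i (x : 'cV[R]_n) : rowsub f M *m x = 0 ->
  \sum_t \det (mxsub (ext_ord f i) (ext_ord g t) M) * x t 0 = \det A * (M *m x) i 0.
Proof.
move=> Mfx; pose c : 'rV[R]_r := mxsub (fun=> i) g M *m \adj A.
have cM_x : \sum_t (c *m mxsub f (fun=> t) M) 0 0 * x t 0 = 0.
  transitivity ((c *m rowsub f M *m x) 0 0).
    rewrite [RHS]mxE; apply: eq_bigr => t _; congr (_ * _).
    by rewrite !mxE; apply: eq_bigr => b _; rewrite !mxE.
  by rewrite -mulmxA Mfx mulmx0 mxE.
under eq_bigr do rewrite mxsub_ext_ord det_border // mxE mulrBl.
by rewrite sumrB cM_x subr0 mxE mulr_sumr; apply: eq_bigr => t _; rewrite mulrA.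
Qed.

Lemma maximal_minor_ker (x : 'cV[R]_n) :
  (forall r', has_nonzero_minor r' -> (r' <= r)%N) -> rowsub f M *m x = 0 -> M *m x = 0.
Proof.
move=> rmax Mfx; apply/matrixP => i j; rewrite (ord1 j) [RHS]mxE.
have bordered0 t : \det (mxsub (ext_ord f i) (ext_ord g t) M) = 0.
  apply/eqP; apply: contraT => nz.
  have : has_nonzero_minor (r + 1) by exists (ext_ord f i), (ext_ord g t).
  by move/rmax; rewrite addn1 ltnn.
have /eqP := bordered_minor_sum i Mfx.
rewrite big1 => [|t _]; last by rewrite bordered0 mul0r.
by rewrite eq_sym mulf_eq0 (negbTE nzA) => /eqP.
Qed.

Lemma rowsub_mul_split (x : 'cV[R]_n) :
  rowsub f M *m x = A *m rowsub g x + rowsub f M *m (proj_compl g *m x).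
Proof.
have ginj := minor_col_inj nzA.
apply/matrixP => a j; rewrite (ord1 j) !mxE (bigID (mem (codom g))) /=; congr (_ + _).
  rewrite -big_uniq /=; last by rewrite map_inj_uniq ?enum_uniq.
  by rewrite /codom big_map big_enum; apply: eq_bigr => b _; rewrite !mxE.
rewrite [RHS](bigID (mem (codom g))) /= [X in _ = X + _]big1 ?add0r => [|t gt]; last first.
  by rewrite proj_complE gt mulr0.
by apply: eq_bigr => t /negbTE gt; rewrite proj_complE gt.
Qed.

Lemma cramer_ker (x : 'cV[R]_n) :
  rowsub f M *m x = 0 <->
  \det A *: rowsub g x = - (\adj A *m rowsub f M) *m (proj_compl g *m x).
Proof.
rewrite rowsub_mul_split; split.
  move=> /eqP; rewrite addr_eq0 => /eqP Ax.
  by rewrite -mul_scalar_mx -mul_adj_mx -mulmxA Ax mulmxN mulNmx !mulmxA.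
move=> Dx; apply/eqP; rewrite -[_ == 0]orFb -(negbTE nzA) -scalemx_eq0.
rewrite scalerDr scalemxAr Dx mulNmx mulmxN !mulmxA mul_mx_adj mul_scalar_mx.
by rewrite !scalemxAl addNr.
Qed.

End Minors.

Lemma int_kernel_cramer k n (M : 'M[int]_(k, n)) (B : int) :
  1 <= B -> (forall i j, `|M i j| <= B) ->
  exists r (g : 'I_r -> 'I_n) (D : int) (P : 'M[int]_(r, n)),
  [/\ injective g, D != 0, `|D| <= k`!%:R * B ^+ k,
      forall a t, `|P a t| <= k`!%:R * B ^+ k &
      forall x : 'cV_n, M *m x = 0 <-> D *: rowsub g x = P *m (proj_compl g *m x)].
Proof.
move=> B1 hM; have B0 : 0 <= B := le_trans ler01 B1.
have minor0 : has_nonzero_minor M 0.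
  by exists (widen_ord (leq0n k)), (widen_ord (leq0n n)); rewrite det_mx00 oner_neq0.
have [r [f [g nzA]] rmax] := ex_maxP (ex_intro _ 0%N minor0) (@has_nonzero_minor_le _ _ _ M).
have rk : (r <= k)%N by apply: (@has_nonzero_minor_le _ _ _ M); exists f, g.
have bound_rk : r`!%:R * B ^+ r <= k`!%:R * B ^+ k.
  by apply: ler_pM; rewrite ?exprn_ge0 ?ler_nat ?leq_fact ?ler_weXn2l.
have hA i j : `|mxsub f g M i j| <= B by rewrite mxE.
exists r, g, (\det (mxsub f g M)), (- (\adj (mxsub f g M) *m rowsub f M)); split.
- exact: minor_col_inj nzA.
- exact: nzA.
- exact: le_trans (norm_det_le B0 hA) bound_rk.
- move=> a t; rewrite mxE normrN; apply: le_trans bound_rk.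
  by apply: norm_adj_mul_le => // i j; rewrite mxE.
move=> x; rewrite -cramer_ker //; split; last exact: (maximal_minor_ker nzA).
by move=> Mx; rewrite rowsubE -mulmxA Mx mulmx0.
Qed.

(** * Hermite bases *)

Definition vanish_below n (j : nat) (y : 'cV[int]_n) : Prop :=
  forall i : 'I_n, (i < j)%N -> y i 0 = 0.

Lemma vanish_below_subgroup n j : is_subgroup (@vanish_below n j).
Proof. by split=> [i _|x y x0 y0 i ij]; rewrite !mxE ?x0 ?y0 ?subr0. Qed.

Lemma vanish_belowS n (j : 'I_n) y :
  vanish_below j y -> y j 0 = 0 -> vanish_below j.+1 y.
Proof.
move=> yj yj0 i; rewrite ltnS leq_eqVlt => /orP [/eqP/val_inj -> //|]; exact: yj.
Qed.

Section Hermite.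
Variables (n : nat) (Lam : 'cV[int]_n -> Prop) (U : pred 'I_n) (D : int).
Hypotheses (D_gt0 : 0 < D) (Lam_subgroup : is_subgroup Lam)
  (Lam_supp : forall y, Lam y -> forall i, ~~ U i -> y i 0 = 0)
  (Lam_D : forall i, U i -> Lam (delta_mx i 0 *~ D)).

Lemma reduce_mod (P : pred 'I_n) y : {subset P <= U} -> Lam y ->
  exists2 y', Lam y' & forall i, y' i 0 = if P i then modz (y i 0) D else y i 0.
Proof.
move=> PU Ly; pose q i := divz (y i 0) D.
exists (y - \sum_(i | P i) delta_mx i 0 *~ (D * q i)).
  apply: subgroupB => //; apply: subgroup_sum => // i Pi.
  by rewrite mulrzA; apply: subgroupMz => //; apply/Lam_D/PU.
move=> i; rewrite !mxE summxE; case: ifP => Pi.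
  rewrite (bigD1 i) //= big1 => [|t /andP [_ ti]]; last first.
    by rewrite mulmxzE mxE eq_sym (negbTE ti) mul0rz.
  rewrite mulmxzE mxE eqxx mulrzz mul1r addr0 {1}(divz_eq (y i 0) D).
  by rewrite mulrC addrAC subrr add0r.
rewrite big1 ?subr0 // => t Pt; rewrite mulmxzE mxE (_ : i == t = false) ?mul0rz //.
by apply: contraFF Pi => /eqP ->.
Qed.

Lemma hermite_pivot (j : 'I_n) : U j ->
  exists lam, [/\ Lam lam, vanish_below j lam, forall i, 0 <= lam i 0 <= D &
    forall y, Lam y -> vanish_below j y -> (lam j 0%R %| y j 0%R)%Z].
Proof.
move=> Uj; pose Q y := Lam y /\ vanish_below j y.
have hQ : is_subgroup Q := subgroupI Lam_subgroup (@vanish_below_subgroup n j).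
have coord_hom : is_hom (fun y : 'cV[int]_n => y j 0) by move=> x y; rewrite mxE.
(* lam: an element of Q with least positive j-th coordinate, its coordinates
   beyond j reduced modulo D. *)
pose pivot (g : nat) := (0 < g)%N /\ exists2 y, Q y & y j 0 = g%:Z.
have D_abs : (absz D)%:Z = D by rewrite abszE gtr0_norm.
have pivotD : pivot `|D|%N.
  split; first by rewrite absz_gt0 gt_eqF.
  exists (delta_mx j 0 *~ D); last by rewrite mulmxzE mxE eqxx mulrzz mul1r.
  split=> [|i ij]; first exact: Lam_D.
  rewrite mulmxzE mxE (_ : i == j = false) ?mul0rz //.
  by apply: contraTF ij => /eqP ->; rewrite ltnn.
have [g [g_gt0 [y0 Qy0 y0j]] gmin] := ex_minP (ex_intro pivot _ pivotD).
have y0_min y : Q y -> 0 < y j 0 -> y0 j 0 <= y j 0.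
  move=> Qy yj_gt0; have yjE : (absz (y j 0))%:Z = y j 0 by rewrite abszE gtr0_norm.
  rewrite y0j -yjE lez_nat; apply: gmin; split; first by rewrite absz_gt0 gt_eqF.
  by exists y.
have [lam Llam lamE] : exists2 lam, Lam lam &
    forall i, lam i 0 = if U i && (j < i)%N then modz (y0 i 0) D else y0 i 0.
  by apply: reduce_mod Qy0.1 => i /andP [].
exists lam; split=> //.
- move=> i ij; rewrite lamE /= (_ : (j < i)%N = false) ?andbF; first exact: Qy0.2.
  by apply: contraTF ij; rewrite -leqNgt => /ltnW.
- move=> i; rewrite lamE /=; case: (ltngtP i j) => [ij|ji|/val_inj ->] /=.
  + by rewrite andbF Qy0.2 // lexx ltW.
  + rewrite andbT; case Ui: (U i); last by rewrite Lam_supp ?Ui ?lexx ?ltW //; exact: Qy0.1.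
    by rewrite modz_ge0 ?gt_eqF //= ltW // ltz_pmod.
  + by rewrite andbF y0j -D_abs !lez_nat gmin.
- move=> y Ly yj; rewrite lamE /= ltnn andbF.
  by apply: subgroup_min_dvd hQ coord_hom Qy0 _ y0_min _ _; rewrite ?y0j ?ltz_nat.
Qed.

Lemma hermite_generators_below s : (s <= n)%N ->
  exists X, [/\ (size X <= s)%N, {in X, forall x, Lam x /\ forall i, 0 <= x i 0 <= D} &
    forall y, Lam y -> vanish_below (n - s) y -> inZspan X y].
Proof.
elim: s => [_|s IH lt_sn].
  exists [::]; split=> // y _ y0; rewrite subn0 in y0.
  have -> : y = 0 by apply/matrixP => i j; rewrite (ord1 j) mxE y0.
  exact: subgroup0 (inZspan_subgroup _).
have [X [sizeX boundedX spanX]] := IH (ltnW lt_sn).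
have lt_jn : (n - s.+1 < n)%N by rewrite -subSn // subSS leq_subr.
pose j := Ordinal lt_jn; have jS : j.+1 = (n - s)%N by rewrite /= -subSn // subSS.
case Uj : (U j); last first.
  exists X; split=> // [|y Ly yj]; first exact: leqW.
  apply: spanX => //; rewrite -jS; apply: (@vanish_belowS n j) => //.
  by apply: Lam_supp; rewrite ?Uj.
have [lam [Llam lam_j lam_bounded lam_dvd]] := hermite_pivot Uj.
exists (lam :: X); split=> [|x|y Ly yj].
- by rewrite /= ltnS.
- by rewrite inE => /predU1P [->|/boundedX].
pose q := divz (y j 0) (lam j 0).
have z_span : inZspan X (y - lam *~ q).
  apply: spanX; first by apply: subgroupB => //; apply: subgroupMz.
  rewrite -jS; apply: (@vanish_belowS n j).
    have vj := @vanish_below_subgroup n j.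
    by apply: (subgroupB vj yj); apply: (subgroupMz vj).
  by rewrite !mxE mulmxzE mulrzz mulrC divzK ?lam_dvd ?subrr.
rewrite -(subrK (lam *~ q) y); apply: (subgroupD (inZspan_subgroup _)).
  by apply: inZspan_sub z_span => x xX; rewrite inE xX orbT.
by apply: (subgroupMz (inZspan_subgroup _)); apply: inZspan_mem; rewrite inE eqxx.
Qed.

Lemma hermite_generators :
  exists X, [/\ (size X <= n)%N, {in X, forall x, Lam x /\ forall i, 0 <= x i 0 <= D} &
    forall y, Lam y -> inZspan X y].
Proof.
have [X [sizeX boundedX spanX]] := hermite_generators_below (leqnn n).
by exists X; split=> // y Ly; apply: spanX => // i; rewrite subnn.
Qed.

End Hermite.

Section CramerKernel.
Variables (k n r : nat) (M : 'M[int]_(k, n)) (g : 'I_r -> 'I_n) (D : int)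
  (P : 'M[int]_(r, n)).
Hypotheses (g_inj : injective g) (D_neq0 : D != 0)
  (kerE : forall x : 'cV_n, M *m x = 0 <-> D *: rowsub g x = P *m (proj_compl g *m x)).

Lemma cramer_ker_coord (x : 'cV[int]_n) b : M *m x = 0 ->
  D * x (g b) 0 = \sum_t P b t * (proj_compl g *m x) t 0.
Proof. by move=> /kerE/matrixP/(_ b 0); rewrite !mxE. Qed.

Lemma cramer_ker_proj_eq0 (x : 'cV[int]_n) : M *m x = 0 -> proj_compl g *m x = 0 -> x = 0.
Proof.
move=> Mx x0; apply/matrixP => i j; rewrite (ord1 j) mxE.
have [/codomP [b ->]|gi] := boolP (i \in codom g).
  apply: (mulfI D_neq0); rewrite mulr0 cramer_ker_coord // x0.
  by rewrite big1 // => t _; rewrite mxE mulr0.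
by have /matrixP/(_ i 0) := x0; rewrite proj_complE (negbTE gi) mxE.
Qed.

Lemma cramer_ker_delta (t : 'I_n) : t \notin codom g ->
  exists2 x : 'cV_n, M *m x = 0 & proj_compl g *m x = delta_mx t 0 *~ D.
Proof.
move=> gt; pose x : 'cV[int]_n := delta_mx t 0 *~ D + \sum_a delta_mx (g a) 0 *~ P a t.
have xE i : x i 0 = (i == t)%:R * D + \sum_a (i == g a)%:R * P a t.
  rewrite !mxE summxE mulmxzE mxE mulrzz andbT; congr (_ + _).
  by apply: eq_bigr => a _; rewrite mulmxzE mxE mulrzz andbT.
have deltaE i : (delta_mx t 0 *~ D) i 0 = (i == t)%:R * D by rewrite mulmxzE mxE mulrzz andbT.
clearbody x.
have proj_x : proj_compl g *m x = delta_mx t 0 *~ D.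
  apply/matrixP => i j; rewrite (ord1 j) proj_complE deltaE.
  have [gi|gi] := boolP (i \in codom g).
    by rewrite (_ : i == t = false) ?mul0r //; apply: contraNF gt => /eqP <-.
  rewrite xE big1 ?addr0 // => a _; rewrite (_ : i == g a = false) ?mul0r //.
  by apply: contraNF gi => /eqP ->; apply: codom_f.
exists x => //; apply/kerE; rewrite proj_x; apply/matrixP => b j.
rewrite (ord1 j) !mxE xE (_ : g b == t = false) ?mul0r ?add0r; last first.
  by apply: contraNF gt => /eqP <-; apply: codom_f.
rewrite (bigD1 b) //= big1 ?addr0 => [|a ab]; last first.
  by rewrite (inj_eq g_inj) eq_sym (negbTE ab) mul0r.
rewrite (bigD1 t) //= big1 ?addr0 => [|i it]; last first.
  by rewrite mulmxzE mxE (negbTE it) mul0rz mulr0.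
by rewrite eqxx mul1r mulmxzE mxE eqxx mulrzz mul1r mulrC.
Qed.

Lemma cramer_ker_span (X : seq 'cV[int]_n) x : {in X, forall x, M *m x = 0} ->
  M *m x = 0 -> inZspan [seq proj_compl g *m x | x <- X] (proj_compl g *m x) ->
  inZspan X x.
Proof.
move=> X_ker Mx [c projxE]; exists c; apply/eqP; rewrite -subr_eq0; apply/eqP.
have X_ker_nth i : (i < size X)%N -> M *m X`_i = 0 by move=> iX; apply/X_ker/mem_nth.
apply: cramer_ker_proj_eq0.
  rewrite mulmxBr Mx mulmx_sumr big1 ?subrr // => i _.
  by rewrite -scaler_int -scalemxAr X_ker_nth ?scaler0.
rewrite mulmxBr mulmx_sumr projxE size_map; apply/eqP; rewrite subr_eq0; apply/eqP.
by apply: eq_bigr => i _; rewrite -!scaler_int -scalemxAr (nth_map 0).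
Qed.

Lemma cramer_ker_bound (x : 'cV[int]_n) (E : int) : M *m x = 0 ->
  `|D| <= E -> (forall a t, `|P a t| <= E) ->
  (forall t, 0 <= (proj_compl g *m x) t 0 <= `|D|) -> forall i, `|x i 0| <= n%:R * E.
Proof.
move=> Mx DE PE projx i; have E_ge0 : 0 <= E := le_trans (normr_ge0 D) DE.
have [/codomP [b ->]|gi] := boolP (i \in codom g); last first.
  have /andP [x_ge0 x_leD] := projx i; rewrite proj_complE (negbTE gi) in x_ge0 x_leD.
  rewrite ger0_norm //; apply: le_trans x_leD (le_trans DE _).
  by rewrite ler_peMl // ler1n (leq_trans _ (ltn_ord i)).
have D_gt0 : 0 < `|D| by rewrite normr_gt0.
rewrite -(ler_pM2l D_gt0) -normrM cramer_ker_coord //.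
apply: le_trans (ler_norm_sum _ _ _) _.
rewrite mulrCA mulr_natl -[X in _ *+ X](card_ord n) -sumr_const; apply: ler_sum => t _.
rewrite normrM mulrC; apply: ler_pM => //; have /andP [y_ge0 y_leD] := projx t.
by rewrite ger0_norm.
Qed.

End CramerKernel.

Lemma int_kernel_generators k n (M : 'M[int]_(k, n)) (B : int) :
  1 <= B -> (forall i j, `|M i j| <= B) ->
  exists X : seq 'cV[int]_n, [/\ (size X <= n)%N,
    {in X, forall x, M *m x = 0 /\ forall i, `|x i 0| <= (n * k`!)%:R * B ^+ k} &
    forall x, M *m x = 0 -> inZspan X x].
Proof.
move=> B1 hM; have [r [g [D [P [g_inj D_neq0 DE PE kerE]]]]] := int_kernel_cramer B1 hM.
(* By Cramer's rule the projection Lam of ker M off the pivot columns contains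
   |D| Z^U, and the projection is injective on ker M. *)
pose Lam (y : 'cV_n) := exists2 x, M *m x = 0 & proj_compl g *m x = y.
have Lam_subgroup : is_subgroup Lam.
  split=> [|_ _ [x Mx <-] [y My <-]]; first by exists 0; rewrite mulmx0.
  by exists (x - y); rewrite !mulmxBr ?Mx ?My ?subrr.
have Lam_supp y : Lam y -> forall i, ~~ (i \notin codom g) -> y i 0 = 0.
  by move=> [x _ <-] i; rewrite negbK proj_complE => ->.
have Lam_D t : t \notin codom g -> Lam (delta_mx t 0 *~ `|D|).
  move=> gt; have [x Mx xE] := cramer_ker_delta g_inj kerE gt.
  have [D_ge0|D_lt0] := ger0P D; first by exists x.
  by exists (- x); rewrite ?mulmxN ?Mx ?oppr0 // mulrNz xE.
have D_gt0 : 0 < `|D| by rewrite normr_gt0.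
have [Y [sizeY Y_bounded Y_span]] := hermite_generators D_gt0 Lam_subgroup Lam_supp Lam_D.
pose lift y := epsilon (inhabits 0) (fun x : 'cV_n => M *m x = 0 /\ proj_compl g *m x = y).
have liftP y : Lam y -> M *m lift y = 0 /\ proj_compl g *m lift y = y.
  move=> [x Mx xy]; apply: (epsilon_spec (inhabits 0)
    (fun x : 'cV_n => M *m x = 0 /\ proj_compl g *m x = y)).
  by exists x.
have lift_ker : {in map lift Y, forall x, M *m x = 0}.
  by move=> _ /mapP [y yY ->]; apply: (liftP y (Y_bounded y yY).1).1.
exists (map lift Y); split=> [|_ /mapP [y yY ->]|x Mx].
- by rewrite size_map.
- have [Ly y_bounded] := Y_bounded y yY; have [Mx px] := liftP y Ly.
  split=> // i; rewrite natrM -mulrA.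
  by apply: (cramer_ker_bound D_neq0 kerE Mx DE PE) => t; rewrite px.
apply: (cramer_ker_span D_neq0 kerE lift_ker Mx).
have -> : [seq proj_compl g *m x | x <- map lift Y] = Y.
  rewrite -map_comp -[RHS]map_id; apply/eq_in_map => y yY /=.
  exact: (liftP y (Y_bounded y yY).1).2.
by apply: Y_span; exists x.
Qed.

(** * Relations among finitely many elements *)

Section MaximalIndependent.
Variables (A : zmodType) (k : nat) (v : 'I_k -> A).
Hypotheses (v_indep : Zindep v) (v_max : forall w : 'I_k.+1 -> A, ~ Zindep w).

Lemma maximal_indep_multiple (a : A) :
  exists2 p : nat, (0 < p)%N & exists c : 'I_k -> int, a *+ p = \sum_r v r *~ c r.
Proof.
pose w (u : 'I_k.+1) := if insub (val u) is Some r then v r else a.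
have wE (c : 'I_k.+1 -> int) :
    \sum_u w u *~ c u = \sum_r v r *~ c (widen_ord (leqnSn k) r) + a *~ c ord_max.
  rewrite big_ord_recr /w /= insubN ?ltnn //; congr (_ + _).
  by apply: eq_bigr => r _; rewrite valK.
have [c [wc0 [u cu_neq0]]] : exists c, \sum_u w u *~ c u = 0 /\ exists u, c u <> 0.
  apply: NNPP => no_rel; apply: (v_max (w := w)) => c wc0 u.
  by apply: NNPP => cu_neq0; apply: no_rel; exists c; split=> //; exists u.
have cmax_neq0 : c ord_max != 0.
  apply/eqP => cmax0; move: wc0; rewrite wE cmax0 mulr0z addr0 => /v_indep c0.
  apply: cu_neq0; have [ltuk|geuk] := ltnP u k.
    by rewrite -(c0 (Ordinal ltuk)); congr c; apply: val_inj.
  by rewrite (_ : u = ord_max) //; apply/val_inj/eqP; rewrite /= eqn_leq -ltnS ltn_ord.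
exists `|c ord_max|%N; first by rewrite absz_gt0.
exists (fun r => c (widen_ord (leqnSn k) r) * - sgz (c ord_max)).
have : a *~ c ord_max = - \sum_r v r *~ c (widen_ord (leqnSn k) r).
  by apply/eqP; rewrite -addr_eq0 addrC -wE wc0.
rewrite pmulrn abszEsg mulrC mulrzA => ->; rewrite -sumrN mulrz_suml.
by apply: eq_bigr => r _; rewrite mulrzA mulrNz mulNrz.
Qed.

Lemma maximal_indep_common_multiple (S : seq A) :
  exists2 N : nat, (0 < N)%N & exists pi : nat -> 'I_k -> int,
    forall j, (j < size S)%N -> S`_j *+ N = \sum_r v r *~ pi j r.
Proof.
elim: S => [|a S [N N_gt0 [pi piE]]]; first by exists 1%N => //; exists (fun _ _ => 0).
have [p p_gt0 [c cE]] := maximal_indep_multiple a.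
exists (p * N)%N; first by rewrite muln_gt0 p_gt0.
exists (fun j r => if j is j'.+1 then pi j' r * p%:Z else c r * N%:Z).
case=> [_|j jS] /=.
  by rewrite mulrnA cE pmulrn mulrz_suml; apply: eq_bigr => r _; rewrite mulrzA.
by rewrite mulnC mulrnA piE // pmulrn mulrz_suml; apply: eq_bigr => r _; rewrite mulrzA.
Qed.
End MaximalIndependent.

Section FiniteIndex.
Variables (V : zmodType) (K : pred V) (G : seq V) (N : nat).
Hypotheses (K_subgroup : is_subgroup (fun x => K x)) (N_gt0 : (0 < N)%N)
  (KG : forall g, g \in G -> K (g *+ N)) (G_span : forall x, K x -> inZspan G x).

Definition box_sum (e : {ffun 'I_(size G) -> 'I_N}) : V := \sum_(i < size G) G`_i *+ e i.

Lemma finite_index_span x : K x ->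
  inZspan ([seq g *+ N | g <- G] ++
           [seq box_sum e | e <- enum {ffun 'I_(size G) -> 'I_N} & K (box_sum e)]) x.
Proof.
move=> Kx; have [c xE] := G_span Kx; have N_neq0 : N%:Z != 0 by rewrite eqz_nat -lt0n.
have mod_lt i : (absz (modz (c i) N) < N)%N.
  by rewrite -ltz_nat gez0_abs ?modz_ge0 ?ltz_pmod.
pose e := [ffun i : 'I_(size G) => Ordinal (mod_lt i)].
have xE' : x = \sum_(i < size G) (G`_i *+ N) *~ divz (c i) N + box_sum e.
  rewrite xE /box_sum -big_split /=; apply: eq_bigr => i _.
  by rewrite ffunE /= !pmulrn gez0_abs ?modz_ge0 // -mulrzA -mulrzDr mulrC -divz_eq.
have Ke : K (box_sum e).
  have -> : box_sum e = x - \sum_(i < size G) (G`_i *+ N) *~ divz (c i) N.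
    by rewrite xE' addrC addKr.
  apply: (subgroupB K_subgroup Kx); apply: (subgroup_sum K_subgroup) => i _.
  by apply: (subgroupMz K_subgroup); apply/KG/mem_nth.
rewrite xE'; apply: (subgroupD (inZspan_subgroup _)).
  apply: (subgroup_sum (inZspan_subgroup _)) => i _; apply: (subgroupMz (inZspan_subgroup _)).
  by apply: inZspan_mem; rewrite mem_cat (map_f (fun g => g *+ N)) ?mem_nth.
by apply: inZspan_mem; rewrite mem_cat orbC (map_f box_sum) // mem_filter Ke mem_enum.
Qed.

End FiniteIndex.

Definition zcomb (A : zmodType) n (a : 'I_n -> A) (c : 'cV[int]_n) : A :=
  \sum_i a i *~ c i 0.

Lemma zcomb_is_hom (A : zmodType) n (a : 'I_n -> A) : is_hom (zcomb a).
Proof. by move=> x y; rewrite -big_split; apply: eq_bigr => i _; rewrite mxE mulrzDr. Qed.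

Section ZcombKernel.
Variables (A : zmodType) (k n N : nat) (v : 'I_k -> A) (a : 'I_n -> A)
  (M : 'M[int]_(k, n)).
Hypotheses (v_indep : Zindep v) (N_gt0 : (0 < N)%N)
  (aM : forall i, a i *+ N = \sum_r v r *~ M r i).

Lemma zcomb_mulrn c : zcomb a c *+ N = \sum_r v r *~ (M *m c) r 0.
Proof.
transitivity (\sum_i \sum_r v r *~ (M r i * c i 0)).
  rewrite /zcomb -sumrMnl; apply: eq_bigr => i _.
  rewrite pmulrn -mulrzA mulrC mulrzA -pmulrn aM mulrz_suml.
  by apply: eq_bigr => r _; rewrite mulrzA.
by rewrite exchange_big; apply: eq_bigr => r _; rewrite mxE mulrz_sumr.
Qed.

Lemma zcomb_eq0_ker c : zcomb a c = 0 -> M *m c = 0.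
Proof.
move=> ac0; have := zcomb_mulrn c; rewrite ac0 mul0rn => /esym/v_indep c0.
by apply/matrixP => r j; rewrite (ord1 j) c0 mxE.
Qed.

Lemma zcomb_ker_mulrn c : M *m c = 0 -> zcomb a (c *+ N) = 0.
Proof.
move=> Mc; rewrite -[zcomb a]/(hom_additive (zcomb_is_hom a) : _ -> _) raddfMn /=.
by rewrite zcomb_mulrn Mc big1 // => r _; rewrite mxE mulr0z.
Qed.

Lemma zcomb_kernel_generators (B : int) : 1 <= B -> (forall r i, `|M r i| <= B) ->
  exists X : seq 'cV[int]_n, [/\ (size X <= n + N ^ n)%N,
    {in X, forall x, zcomb a x = 0 /\
       forall i, `|x i 0| <= (n * N * (n * k`!))%:R * B ^+ k} &
    forall c, zcomb a c = 0 -> inZspan X c].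
Proof.
move=> B1 MB; have [G [sizeG G_ker G_span]] := int_kernel_generators B1 MB.
set E := (n * k`!)%:R * B ^+ k in G_ker *.
(* N ker M <= ker (zcomb a) <= ker M *)
pose K c := zcomb a c == 0.
have K_subgroup : is_subgroup (fun c => K c).
  split=> [|x y /eqP ax0 /eqP ay0]; apply/eqP; first exact: hom0 (zcomb_is_hom a).
  by rewrite -[zcomb a]/(hom_additive (zcomb_is_hom a) : _ -> _) raddfB /= ax0 ay0 subrr.
have KG g : g \in G -> K (g *+ N) by move=> /G_ker [Mg _]; apply/eqP/zcomb_ker_mulrn.
have G_span' c : K c -> inZspan G c by move=> /eqP/zcomb_eq0_ker/G_span.
exists ([seq g *+ N | g <- G] ++
        [seq box_sum e | e <- enum {ffun 'I_(size G) -> 'I_N} & K (box_sum e)]).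
split=> [||c /eqP ac0]; last exact: finite_index_span K_subgroup N_gt0 KG G_span' _ ac0.
  rewrite size_cat size_map leq_add // size_map size_filter (leq_trans (count_size _ _)) //.
  by rewrite -cardE card_ffun !card_ord leq_pexp2l.
have E_ge0 : 0 <= E by rewrite mulr_ge0 ?ler0n ?exprn_ge0 // (le_trans ler01).
have ->: (n * N * (n * k`!))%:R * B ^+ k = E *+ (n * N) by rewrite natrM -mulrA mulr_natl.
move=> x; rewrite mem_cat => /orP [/mapP [g gG ->]|/mapP [e]].
  split=> [|i]; first exact/eqP/KG.
  rewrite mulmxnE normrMn (le_trans (ler_wMn2r N ((G_ker g gG).2 i))) //.
  by rewrite ler_wpMn2l // leq_pmull // (leq_trans _ (ltn_ord i)).
rewrite mem_filter => /andP [/eqP ae0 _] ->; split=> // i.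
rewrite summxE (le_trans (ler_norm_sum _ _ _)) //.
apply: le_trans (_ : \sum_(j < size G) E *+ N <= _).
  apply: ler_sum => j _; rewrite mulmxnE normrMn.
  have [_ Gj_bound] := G_ker _ (mem_nth 0 (ltn_ord j)).
  by apply: le_trans (ler_wMn2r _ (Gj_bound i)) _; rewrite ler_wpMn2l // ltnW.
by rewrite sumr_const card_ord -mulrnA ler_wpMn2l // mulnC leq_mul2r sizeG orbT.
Qed.

End ZcombKernel.

(** * Word lengths *)

Definition l1norm n (c : 'cV[int]_n) : nat := \sum_i absz (c i 0%R).

Section WordLength.
Variables (G : zmodType) (S : seq G).

Lemma wordlen_spec g : in_span S g ->
  wl_le S g (wordlen S g) /\ forall n, wl_le S g n -> (wordlen S g <= n)%N.
Proof.
move=> /ex_minP [n gn n_min].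
by apply: (epsilon_spec (inhabits 0%N) (fun n => wl_le S g n /\ _)); exists n.
Qed.

Lemma wordlen_le g n : wl_le S g n -> (wordlen S g <= n)%N.
Proof. by move=> gn; apply: (wordlen_spec (ex_intro _ n gn)).2. Qed.

Lemma wl_le_wordlen g : in_span S g -> wl_le S g (wordlen S g).
Proof. by move=> /wordlen_spec []. Qed.

Lemma wl_le_trans g m n : wl_le S g m -> (m <= n)%N -> wl_le S g n.
Proof. by move=> [c [sc [gE cm]]] mn; exists c; do 2!split=> //; apply: leq_trans mn. Qed.

Lemma wl_le_zcomb (c : 'cV[int]_(size S)) :
  wl_le S (zcomb (fun i : 'I_(size S) => S`_i) c) (l1norm c).
Proof.
exists [seq c i 0 | i <- enum 'I_(size S)]; rewrite size_map size_enum_ord.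
have cE (i : 'I_(size S)) : [seq c i 0 | i <- enum 'I_(size S)]`_i = c i 0.
  by rewrite (nth_map i) ?size_enum_ord // nth_ord_enum.
by do 2!split=> //; [apply: eq_bigr | apply/eq_leq/eq_bigr] => i _; rewrite cE.
Qed.

Lemma wordlen_zcomb_le (c : 'cV[int]_(size S)) (b : nat) :
  (forall i, `|c i 0| <= b%:R) ->
  (wordlen S (zcomb (fun i : 'I_(size S) => S`_i)%R c) <= size S * b)%N.
Proof.
move=> cb; apply: leq_trans (wordlen_le (wl_le_zcomb c)) _.
rewrite -[X in (_ <= X * _)%N](card_ord (size S)) -sum_nat_const.
by apply: leq_sum => i _; rewrite -lez_nat abszE -natz cb.
Qed.

Lemma in_span_inZspan g : inZspan S g -> in_span S g.
Proof.
move=> [c gE]; pose d : 'cV[int]_(size S) := \col_i c i.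
have -> : g = zcomb (fun i : 'I_(size S) => S`_i) d.
  by rewrite gE; apply: eq_bigr => i _; rewrite mxE.
by exists (l1norm d); apply: wl_le_zcomb.
Qed.

Lemma subnorm_le (K : G -> Prop) X :
  gen_by X K -> (subnorm S K <= \max_(x <- X) wordlen S x)%N.
Proof.
pose norms n := exists X, gen_by X K /\ (\max_(x <- X) wordlen S x)%N = n.
move=> XK; have : norms (\max_(x <- X) wordlen S x)%N by exists X.
move=> /(ex_intro norms) /ex_minP [_ [Y [YK <-]] Y_min].
have : exists n, norms n /\ forall X, gen_by X K -> (n <= \max_(x <- X) wordlen S x)%N.
  exists (\max_(x <- Y) wordlen S x)%N; split=> [|Z ZK]; first by exists Y.
  by apply: Y_min; exists Z.
by move=> /(epsilon_spec (inhabits 0%N)) [_]; apply.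
Qed.

End WordLength.

(** * Kernels of homomorphisms from Z^l *)

Lemma inZspan_hom (G H : zmodType) (f : G -> H) (X : seq G) y :
  is_hom f -> inZspan X y -> inZspan (map f X) (f y).
Proof.
move=> hf [c ->]; rewrite hom_sum_mulrz //; apply: (subgroup_sum (inZspan_subgroup _)) => i _.
by apply: (subgroupMz (inZspan_subgroup _)); apply/inZspan_mem/map_f/mem_nth.
Qed.

Lemma wl_le_opnorm (G H : zmodType) (phi : G -> H) (S : seq G) (S' : seq H) s :
  generates S' -> s \in S -> wl_le S' (phi s) (opnorm phi S S').
Proof.
move=> S'_gen sS; apply: wl_le_trans (wl_le_wordlen (S'_gen _)) _.
exact: (leq_bigmax_seq (F := fun s => wordlen S' (phi s))) sS _.
Qed.

Lemma short_word_coords (A : zmodType) (S' : seq A) k (v : 'I_k -> A) (N C0 : nat)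
    (pi : nat -> 'I_k -> int) :
  (forall j, (j < size S')%N -> S'`_j *+ N = \sum_r v r *~ pi j r) ->
  (forall j r, (j < size S')%N -> `|pi j r| <= C0%:R) ->
  forall x L, wl_le S' x L ->
  exists2 col : 'I_k -> int, x *+ N = \sum_r v r *~ col r & forall r, `|col r| <= (L * C0)%:R.
Proof.
move=> piE piC0 x L [d [_ [xE dL]]].
pose M : 'M[int]_(k, size S') := \matrix_(r, j) pi j r.
pose dc : 'cV[int]_(size S') := \col_j d`_j.
exists (fun r => (M *m dc) r 0).
  have -> : x = zcomb (fun j : 'I_(size S') => S'`_j) dc.
    by rewrite xE; apply: eq_bigr => j _; rewrite mxE.
  by apply: zcomb_mulrn => j; rewrite piE //; apply: eq_bigr => r _; rewrite mxE.
move=> r; rewrite mxE (le_trans (ler_norm_sum _ _ _)) //.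
apply: le_trans (_ : \sum_(j < size S') C0%:R * (absz d`_j)%:R <= _).
  apply: ler_sum => j _; rewrite !mxE normrM; apply: ler_pM => //; first exact: piC0.
  by rewrite natz abszE.
by rewrite -mulr_sumr -natr_sum -natrM ler_nat mulnC leq_mul2r dL orbT.
Qed.

Section KernelGenerators.
Variables (A : zmodType) (S' : seq A) (k : nat) (v : 'I_k -> A) (N C0 : nat)
  (pi : nat -> 'I_k -> int).
Hypotheses (S'_gen : generates S') (v_indep : Zindep v) (N_gt0 : (0 < N)%N)
  (C0_gt0 : (0 < C0)%N)
  (piE : forall j, (j < size S')%N -> S'`_j *+ N = \sum_r v r *~ pi j r)
  (piC0 : forall j r, (j < size S')%N -> `|pi j r| <= C0%:R).

Lemma hom_kernel_generators l (phi : 'rV[int]_l -> A) (S : seq 'rV[int]_l) :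
  is_hom phi -> generates S ->
  let n := size S in let L := maxn 1 (opnorm phi S S') in
  exists X, [/\ gen_by X (fun x => phi x = 0), (size X <= n + N ^ n)%N &
    (\max_(x <- X) wordlen S x <= n * (n * N * (n * k`!)) * C0 ^ k * L ^ k)%N].
Proof.
move=> phi_hom S_gen n L; pose a (i : 'I_n) := phi S`_i.
have aL i : wl_le S' (a i) L.
  by apply: wl_le_trans (leq_maxr 1 _); apply/wl_le_opnorm/mem_nth.
have [col colE colB] := fin_all_exists2 (fun i => short_word_coords piE piC0 (aL i)).
pose M : 'M[int]_(k, n) := \matrix_(r, i) col i r.
have B1 : 1 <= (L * C0)%:R :> int by rewrite ler1n muln_gt0 leq_maxl.
have [Xc [sizeXc Xc_ker Xc_span]] :
  exists X : seq 'cV[int]_n, [/\ (size X <= n + N ^ n)%N,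
    {in X, forall x, zcomb a x = 0 /\
       forall i, `|x i 0| <= (n * N * (n * k`!))%:R * (L * C0)%:R ^+ k} &
    forall c, zcomb a c = 0 -> inZspan X c].
  apply: (@zcomb_kernel_generators _ _ _ _ _ _ M) v_indep N_gt0 _ _ B1 _ => [i|r i].
    by rewrite colE; apply: eq_bigr => r _; rewrite mxE.
  by rewrite mxE.
pose T (c : 'cV[int]_n) : 'rV[int]_l := zcomb (fun i : 'I_n => S`_i) c.
have phiT c : phi (T c) = zcomb a c by rewrite /T /zcomb hom_sum_mulrz.
exists (map T Xc); split=> [||]; first split=> [_ /mapP [x xX ->]|h h_ker].
- by rewrite phiT (Xc_ker x xX).1.
- have [_ [c [_ [hE _]]]] := S_gen h; pose cc : 'cV[int]_n := \col_i c`_i.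
  have hT : h = T cc by rewrite hE; apply: eq_bigr => i _; rewrite mxE.
  apply/in_span_inZspan; rewrite hT; apply: inZspan_hom (zcomb_is_hom _) _.
  by apply: Xc_span; rewrite -phiT -hT.
- by rewrite size_map.
apply/bigmax_leqP_seq => _ /mapP [x xX ->] _.
have -> : (n * (n * N * (n * k`!)) * C0 ^ k * L ^ k =
           n * (n * N * (n * k`!) * (L * C0) ^ k))%N by rewrite expnMn; ring.
by apply: wordlen_zcomb_le => i; rewrite natrM natrX; apply: (Xc_ker x xX).2.
Qed.
End KernelGenerators.

Theorem mainTheorem11 (A : zmodType) (S' : seq A) (k m : nat) :
  generates S' -> tf_rank A k -> (0 < k)%N ->
  exists C : nat, (0 < C)%N /\
    (forall (l : nat) (phi : 'rV[int]_l -> A) (S : seq 'rV[int]_l),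
        is_hom phi -> generates S -> (size S <= m)%N ->
        (subnorm S (fun v => phi v = 0%R) <= C * (maxn 1 (opnorm phi S S')) ^ k)%N) /\
    (exists m' : nat,
      forall (l : nat) (phi : 'rV[int]_l -> A) (S : seq 'rV[int]_l),
        is_hom phi -> generates S -> (size S <= m)%N ->
        exists X : seq 'rV[int]_l,
          gen_by X (fun v => phi v = 0%R) /\ (size X <= m')%N /\
          (\max_(x <- X) wordlen S x <= C * (maxn 1 (opnorm phi S S')) ^ k)%N).
Proof.
move=> S'_gen [[v v_indep] v_max] _.
have [N N_gt0 [pi piE]] := maximal_indep_common_multiple v_indep v_max S'.
pose C0 := (\sum_(j < size S') \sum_r absz (pi j r)).+1.
have piC0 j r : (j < size S')%N -> `|pi j r| <= C0%:R.
  move=> jS; rewrite -abszE natz lez_nat leqW //.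
  apply: leq_trans (_ : absz (pi j r) <= \sum_r absz (pi j r))%N _.
    by rewrite (bigD1 r) //= leq_addr.
  by rewrite (bigD1 (Ordinal jS)) //= leq_addr.
pose C := (m * (m * N * (m * k`!)) * C0 ^ k).+1.
have kernel_bound l (phi : 'rV[int]_l -> A) (S : seq 'rV[int]_l) :
    is_hom phi -> generates S -> (size S <= m)%N ->
    exists X : seq 'rV[int]_l,
      [/\ gen_by X (fun v => phi v = 0), (size X <= m + N ^ m)%N &
         (\max_(x <- X) wordlen S x <= C * (maxn 1 (opnorm phi S S')) ^ k)%N].
  move=> phi_hom S_gen Sm.
  have [X [X_gen sizeX X_len]] :=
    hom_kernel_generators S'_gen v_indep N_gt0 (ltn0Sn _) piE piC0 phi_hom S_gen.
  exists X; split=> //; first by rewrite (leq_trans sizeX) // leq_add // leq_pexp2l.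
  by rewrite (leq_trans X_len) // leq_mul2r ltnW ?orbT // ltnS; repeat apply: leq_mul.
exists C; split=> //; split=> [l phi S phi_hom S_gen Sm|].
  have [X [X_gen _ X_len]] := kernel_bound l phi S phi_hom S_gen Sm.
  exact: leq_trans (subnorm_le S X_gen) X_len.
exists (m + N ^ m)%N => l phi S phi_hom S_gen Sm.
by have [X [X_gen sizeX X_len]] := kernel_bound l phi S phi_hom S_gen Sm; exists X.
Qed.
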